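(* Let $G$ be a finite simple undirected graph whose VC-dimension is $d$. Then for every simple coalition game $\mathcal G$ over $G$, $\dfrac{\kappa(\mathcal G)}{\rho(\mathcal G)}\le d+1$.
   Context: Coalition game over $G=(V,E)$: a valuation $v:2^V\to\mathbb Z_{\ge 0}$ with $v(\emptyset)=0$, $v(S)=0$ whenever $G[S]$ is disconnected, and $v$ not identically zero; it is simple if $v(S)\in\{0,1\}$ for all $S$. $\kappa(\mathcal G)=\min\{\sum_{i\in V}x_i: x\in\mathbb Z_{\ge0}^V,\ \sum_{i\in S}x_i\ge v(S)\ \forall S\subseteq V\}$; $\rho(\mathcal G)$ is the maximum of $\sum_{S\in\mathcal P}v(S)$ over families $\mathcal P$ of pairwise disjoint subsets of $V$. A set $X\subseteq V$ is shattered by a family $\mathcal R$ of subsets of $V$ if for every $Y\subseteq X$ there is $R\in\mathcal R$ with $R\cap X=Y$; the VC-dimension of $\mathcal R$ is the maximum size of a shattered set. The VC-dimension of the graph $G$ is the VC-dimension of the family of all nonempty $S\subseteq V$ such that $G[S]$ is connected. *)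

From HB Require Import structures.
From mathcomp Require Import all_boot all_order all_algebra.
Set Implicit Arguments. Unset Strict Implicit. Unset Printing Implicit Defensive.
Import Order.TTheory GRing.Theory Num.Theory.

Definition simple_graph (T : finType) (e : rel T) : Prop :=
  symmetric e /\ irreflexive e.

Definition induced (T : finType) (e : rel T) (S : {set T}) : rel T :=
  fun x y => [&& e x y, x \in S & y \in S].

Definition connected_in (T : finType) (e : rel T) (S : {set T}) : bool :=
  [forall x in S, forall y in S, connect (induced e S) x y].

Definition conn_family (T : finType) (e : rel T) : {set {set T}} :=
  [set S : {set T} | (S != set0) && connected_in e S].

Definition shattered (T : finType) (R : {set {set T}}) (X : {set T}) : bool :=
  [forall Y : {set T}, (Y \subset X) ==> [exists A in R, A :&: X == Y]].

Definition vc_dim (T : finType) (R : {set {set T}}) : nat :=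
  \max_(X : {set T} | shattered R X) #|X|.

Definition graph_vc_dim (T : finType) (e : rel T) : nat :=
  vc_dim (conn_family e).

Definition coalition_game (T : finType) (e : rel T) (v : {set T} -> nat) : Prop :=
  [/\ v set0 = 0%N,
      (forall S : {set T}, ~~ connected_in e S -> v S = 0%N)
    & exists S : {set T}, v S <> 0%N].

Definition simple_game (T : finType) (v : {set T} -> nat) : Prop :=
  forall S : {set T}, (v S <= 1)%N.

Definition feasible (T : finType) (v : {set T} -> nat) (x : T -> nat) : Prop :=
  forall S : {set T}, (v S <= \sum_(i in S) x i)%N.

Definition is_kappa (T : finType) (v : {set T} -> nat) (k : nat) : Prop :=
  (exists2 x : T -> nat, feasible v x & \sum_(i : T) x i = k) /\
  (forall x : T -> nat, feasible v x -> (k <= \sum_(i : T) x i)%N).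

Definition pairwise_disjoint (T : finType) (P : {set {set T}}) : bool :=
  [forall A in P, forall B in P, (A != B) ==> [disjoint A & B]].

Definition rho (T : finType) (v : {set T} -> nat) : nat :=
  \max_(P : {set {set T}} | pairwise_disjoint P) \sum_(S in P) v S.

From HB Require Import structures.
From mathcomp Require Import all_boot all_order all_algebra.
Import Order.TTheory GRing.Theory Num.Theory.
Set Implicit Arguments. Unset Strict Implicit.

(* Let [H] be a minimal set meeting every winning coalition; putting weight 1 on
   [H] is feasible, so kappa <= |H|.  Minimality gives each [h] in [H] a private
   winning coalition [S_h] with [S_h ∩ H = {h}].  Take a maximal pairwise
   disjoint family [P] of private coalitions: rho >= |P|, and every [S_h] meets
   some [S_q] in [P].  The [h <> q] whose [S_h] meets [S_q] form a set shattered
   by the connected sets, since [S_q] together with any subfamily of these [S_h]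
   is connected and cuts [H] exactly in that subfamily.  So each [S_q] is met
   by at most [d + 1] private coalitions and |H| <= (d + 1) |P|. *)

Section ConnectedUnion.

Variables (T : finType) (e : rel T).

Lemma connect_induced_sub (S A : {set T}) x y :
  connected_in e S -> S \subset A -> x \in S -> y \in S ->
  connect (induced e A) x y.
Proof.
move=> /forall_inP /(_ x) connS sSA xS yS.
have /forall_inP /(_ y yS) := connS xS.
apply: connect_sub => u w /and3P [euw uS wS].
by apply: connect1; apply/and3P; split; rewrite // (subsetP sSA).
Qed.

Lemma connected_in_setU_bigcup (I : finType) (C : {set T}) (J : {set I})
    (F : I -> {set T}) :
  connected_in e C ->
  (forall i, i \in J -> connected_in e (F i) /\ ~~ [disjoint F i & C]) ->
  connected_in e (C :|: \bigcup_(i in J) F i).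
Proof.
move=> connC connF; set A := C :|: _.
have sCA : C \subset A by apply: subsetUl.
have sFA i : i \in J -> F i \subset A.
  by move=> iJ; apply: subset_trans (subsetUr _ _); apply: bigcup_sup.
have to_C x : x \in A -> exists2 c, c \in C &
    connect (induced e A) x c /\ connect (induced e A) c x.
  case/setUP => [xC | /bigcupP [i iJ xF]]; first by exists x; rewrite ?connect0.
  have [connFi] := connF i iJ.
  rewrite -setI_eq0 => /set0Pn [z /setIP [zF zC]].
  by exists z => //; split; apply: (connect_induced_sub connFi (sFA i iJ)).
apply/forall_inP => x xA; apply/forall_inP => y yA.
have [c cC [xc _]] := to_C x xA; have [c' c'C [_ c'y]] := to_C y yA.
apply: connect_trans xc (connect_trans _ c'y).
exact: connect_induced_sub connC sCA cC c'C.
Qed.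

End ConnectedUnion.

Lemma leq_vc_dim (T : finType) (R : {set {set T}}) (X : {set T}) :
  shattered R X -> #|X| <= vc_dim R.
Proof. exact: (@leq_bigmax_cond _ (shattered R) (fun X => #|X|)). Qed.

Lemma leq_card_bigcup (T I : finType) (J : {set I}) (F : I -> {set T}) :
  #|\bigcup_(i in J) F i| <= \sum_(i in J) #|F i|.
Proof.
elim/big_ind2: _ => [|n1 U1 n2 U2 le1 le2|//]; first by rewrite cards0.
exact: leq_trans (leq_card_setU U1 U2).1 (leq_add le1 le2).
Qed.

Lemma pairwise_disjointU1 (T : finType) (P : {set {set T}}) (A : {set T}) :
  pairwise_disjoint P -> (forall B, B \in P -> [disjoint A & B]) ->
  pairwise_disjoint (A |: P).
Proof.
move=> /forall_inP disjP disjA.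
apply/forall_inP => B1; rewrite in_setU1 => B1P.
apply/forall_inP => B2; rewrite in_setU1 => B2P.
case/predU1P: B1P => [-> | B1P]; case/predU1P: B2P => [-> | B2P].
- by rewrite eqxx.
- by rewrite disjA ?implybT.
- by rewrite disjoint_sym disjA ?implybT.
- exact: (forall_inP (disjP B1 B1P)).
Qed.

Definition hitting (T : finType) (W : {set {set T}}) (H : {set T}) : bool :=
  [forall S in W, ~~ [disjoint S & H]].

Section MinimalHittingSet.

Variables (T : finType) (W : {set {set T}}) (H : {set T}).
Hypothesis minH : minset (hitting W) H.

Lemma hitting_meet S : S \in W -> exists2 z, z \in S & z \in H.
Proof.
have [/forall_inP hitH _] := minsetP minH.
by move=> /hitH; rewrite -setI_eq0 => /set0Pn [z /setIP []]; exists z.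
Qed.

Lemma exists_private h :
  h \in H -> exists S, (S \in W) && (S :&: H == [set h]).
Proof.
move=> hH; have [_ minH'] := minsetP minH.
have /forall_inPn [S SW] : ~~ hitting W (H :\ h).
  apply: contraPN (setD1K hH) => /minH' /(_ (subsetDl H [set h])) <-.
  by apply/setP => /(_ h); rewrite !inE eqxx.
rewrite negbK => disjS; exists S; rewrite SW /=.
have notin_rest z : z \in S -> z \in H -> z = h.
  move=> zS zH; apply/eqP/negPn/negP => zh.
  by have := disjointFr disjS zS; rewrite !inE zh zH.
apply/eqP/setP => z; rewrite !inE; apply/andP/eqP => [[zS zH] | ->].
  exact: notin_rest.
by have [w wS wH] := hitting_meet SW; rewrite -(notin_rest w).
Qed.

Definition priv h := odflt set0 [pick S in W | S :&: H == [set h]].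

Lemma priv_spec h : h \in H -> priv h \in W /\ priv h :&: H = [set h].
Proof.
move=> hH; rewrite /priv; case: pickP => [S /andP [SW /eqP] | none] //=.
by have [S /andP [SW eqS]] := exists_private hH; have := none S; rewrite SW eqS.
Qed.

Lemma mem_priv h : h \in H -> h \in priv h.
Proof.
move=> hH; have [_ /setP /(_ h)] := priv_spec hH.
by rewrite !inE eqxx hH => /andP [].
Qed.

Lemma priv_memH h z : h \in H -> z \in H -> z \in priv h -> z = h.
Proof.
move=> hH zH zh; have [_ /setP /(_ z)] := priv_spec hH.
by rewrite !inE zh zH => /esym /eqP.
Qed.

End MinimalHittingSet.

Section PackingBound.

Variables (T : finType) (e : rel T) (W : {set {set T}}) (H : {set T}).
Hypotheses (sW_conn : W \subset conn_family e) (minH : minset (hitting W) H).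

Local Notation priv := (priv W H).

Lemma connected_priv h : h \in H -> connected_in e (priv h).
Proof.
move=> hH; have [/(subsetP sW_conn)] := priv_spec minH hH.
by rewrite inE => /andP [].
Qed.

(* The witness for [Y] is [priv q] together with the [priv h], [h] in [Y]; it
   cuts [X] exactly in [Y] because [priv h] meets [H] only in [h]. *)
Lemma shattered_priv_neighbours q (X : {set T}) :
  q \in H -> X \subset H :\ q ->
  (forall h, h \in X -> ~~ [disjoint priv h & priv q]) ->
  shattered (conn_family e) X.
Proof.
move=> qH sXH meetX.
have XH z : z \in X -> z != q /\ z \in H.
  by move=> /(subsetP sXH); rewrite !inE => /andP.
apply/forallP => Y; apply/implyP => sYX; apply/exists_inP.
exists (priv q :|: \bigcup_(h in Y) priv h).
  rewrite inE; apply/andP; split.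
    by apply/set0Pn; exists q; rewrite inE mem_priv.
  apply: connected_in_setU_bigcup (connected_priv qH) _ => h hY.
  have [_ hH] := XH h (subsetP sYX h hY).
  by split; [apply: connected_priv | apply: meetX; apply: (subsetP sYX)].
apply/eqP/setP => z; rewrite inE; apply/idP/idP.
- case/andP => /setUP [zq | /bigcupP [h hY zh]] zX; have [zq' zH] := XH z zX.
    by rewrite (priv_memH minH qH zH zq) eqxx in zq'.
  have [_ hH] := XH h (subsetP sYX h hY).
  by rewrite (priv_memH minH hH zH zh).
- move=> zY; have zX := subsetP sYX z zY; have [_ zH] := XH z zX.
  rewrite zX andbT; apply/setUP; right.
  by apply/bigcupP; exists z; rewrite ?mem_priv.
Qed.

Lemma card_priv_neighbours q :
  q \in H ->
  #|[set h in H | ~~ [disjoint priv h & priv q]]| <= (graph_vc_dim e).+1.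
Proof.
move=> qH; set N := [set h in H | _].
have shN : shattered (conn_family e) (N :\ q).
  apply: shattered_priv_neighbours qH _ _.
    by apply: setSD; apply/subsetP => h; rewrite inE => /andP [].
  by move=> h; rewrite !inE => /and3P [].
by rewrite (cardsD1 q N); apply: leq_add (leq_b1 _) (leq_vc_dim shN).
Qed.

Lemma hitting_le_packing :
  exists2 P : {set {set T}}, P \subset W &
    pairwise_disjoint P /\ #|H| <= #|P| * (graph_vc_dim e).+1.
Proof.
pose cand (P : {set {set T}}) := (P \subset priv @: H) && pairwise_disjoint P.
have cand0 : cand set0.
  by rewrite /cand sub0set; apply/forall_inP => A; rewrite inE.
have [P maxP _] := maxset_exists cand0.
have [/andP [sP_priv disjP] maxP'] := maxsetP maxP.
have meetP h : h \in H -> exists2 A, A \in P & ~~ [disjoint priv h & A].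
  move=> hH; apply/exists_inP; apply: contraT => /exists_inPn /= disjh.
  have candh : cand (priv h |: P).
    rewrite /cand subUset sub1set imset_f //= sP_priv.
    by apply: pairwise_disjointU1 => // A /disjh /negPn.
  have /disjh /negPn /pred0P /(_ h) : priv h \in P.
    by rewrite -(maxP' _ candh (subsetUr _ _)) setU11.
  by rewrite /= mem_priv.
exists P; last split => //.
  apply/subsetP => A /(subsetP sP_priv) /imsetP [h hH ->].
  by case: (priv_spec minH hH).
pose N (A : {set T}) := [set h in H | ~~ [disjoint priv h & A]].
have sH_N : H \subset \bigcup_(A in P) N A.
  apply/subsetP => h hH; have [A AP meetA] := meetP h hH.
  by apply/bigcupP; exists A; rewrite // inE hH.
rewrite -sum_nat_const; apply: leq_trans (subset_leq_card sH_N) _.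
apply: leq_trans (leq_card_bigcup P N) _.
apply: leq_sum => A /(subsetP sP_priv) /imsetP [q qH ->].
exact: card_priv_neighbours.
Qed.

End PackingBound.

Lemma exists_hitting_packing (T : finType) (e : rel T) (W : {set {set T}}) :
  W \subset conn_family e ->
  exists (H : {set T}) (P : {set {set T}}),
    [/\ hitting W H, P \subset W, pairwise_disjoint P
       & #|H| <= #|P| * (graph_vc_dim e).+1].
Proof.
move=> sW_conn.
have hitT : hitting W setT.
  apply/forall_inP => S /(subsetP sW_conn).
  rewrite inE => /andP [/set0Pn [z zS] _].
  by rewrite -setI_eq0 setIT; apply/set0Pn; exists z.
have [H minH _] := minset_exists hitT.
have [P sPW [disjP leH]] := hitting_le_packing sW_conn minH.
by exists H, P; split; rewrite // minsetp.
Qed.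

Definition winning (T : finType) (v : {set T} -> nat) : {set {set T}} :=
  [set S | 0 < v S].

Section SimpleGame.

Variables (T : finType) (v : {set T} -> nat).

Lemma winning_sub_conn_family (e : rel T) :
  coalition_game e v -> winning v \subset conn_family e.
Proof.
case=> v0 v_conn _; apply/subsetP => S; rewrite !inE => vS.
apply/andP; split; first by apply: contraTneq vS => ->; rewrite v0.
by apply: contraTT vS => /v_conn ->.
Qed.

Lemma kappa_le_hitting (k : nat) (H : {set T}) :
  simple_game v -> is_kappa v k -> hitting (winning v) H -> k <= #|H|.
Proof.
move=> simple_v [_ min_k] /forall_inP hitH.
have feasH : feasible v (fun i => i \in H : nat).
  move=> S; have [-> // | vS] := posnP (v S).
  have /hitH : S \in winning v by rewrite inE.
  rewrite -setI_eq0 => /set0Pn [z /setIP [zS zH]].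
  by rewrite (leq_trans (simple_v S)) // (bigD1 z) //= zH.
have <- : \sum_i (i \in H : nat) = #|H|.
  by rewrite -sum1_card [RHS]big_mkcond; apply: eq_bigr => i _; case: (i \in H).
exact: min_k.
Qed.

Lemma packing_le_rho (P : {set {set T}}) :
  P \subset winning v -> pairwise_disjoint P -> #|P| <= rho v.
Proof.
move=> sPW disjP; rewrite -sum1_card.
apply: leq_trans (@leq_bigmax_cond _ (@pairwise_disjoint T)
                    (fun P => \sum_(S in P) v S) _ disjP).
by apply: leq_sum => S /(subsetP sPW); rewrite inE.
Qed.

End SimpleGame.

Theorem theorem4p2 (T : finType) (e : rel T) (d : nat)
  (hG : simple_graph e) (hd : graph_vc_dim e = d)
  (v : {set T} -> nat) (hv : coalition_game e v) (hs : simple_game v)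
  (k : nat) (hk : is_kappa v k) :
  ((k%:R / (rho v)%:R : rat) <= (d.+1)%:R)%R.
Proof.
have [H [P [hitH sPW disjP leHP]]] :=
  exists_hitting_packing (winning_sub_conn_family hv).
have le_k : k <= rho v * d.+1.
  rewrite -hd; apply: leq_trans (kappa_le_hitting hs hk hitH) _.
  exact: leq_trans leHP (leq_mul (packing_le_rho sPW disjP) (leqnn _)).
(* When [rho v = 0] the quotient is [k / 0 = 0]. *)
have [-> | rho_pos] := posnP (rho v); first by rewrite invr0 mulr0 ler0n.
by rewrite ler_pdivrMr ?ltr0n // -natrM ler_nat mulnC.
Qed.
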